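(* Let $R$ be a ring and let $I,J$ be ideals of $R$ with $I\cap J=0$. Let $x\in I$ and $y\in J$. Then for all $\theta,\theta'\in\widehat\Theta(R)$, $\theta(x)\cdot\theta'(y)=0$.
   Context: Rings are commutative with unit. $\widehat\Theta(R)$ is the free monoid generated by the set $\mathrm{Der}(R)$ of all derivations of $R$; a word $\delta_1\cdots\delta_n$ acts on $R$ as the composition $\delta_1\circ\cdots\circ\delta_n$ (the empty word acting as the identity). *)

From mathcomp Require Import all_boot all_order all_algebra.
Set Implicit Arguments. Unset Strict Implicit. Unset Printing Implicit Defensive.
Import GRing.Theory.
Local Open Scope ring_scope.

Definition is_derivation (R : comPzRingType) (d : R -> R) : Prop :=
  (forall a b : R, d (a + b) = d a + d b) /\
  (forall a b : R, d (a * b) = a * d b + d a * b).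

Definition Der (R : comPzRingType) := {d : R -> R | is_derivation d}.

(* \widehat\Theta(R): the free monoid on Der(R), i.e. finite words. *)
Definition ThetaHat (R : comPzRingType) := seq (Der R).

(* The word d1 ... dn acts as d1 \o ... \o dn (empty word = identity). *)
Definition theta_act (R : comPzRingType) (w : ThetaHat R) : R -> R :=
  foldr (fun (d : Der R) (f : R -> R) => fun x => proj1_sig d (f x)) id w.

(* An ideal of R (two-sided = one-sided, R commutative). *)
Definition is_ideal (R : comPzRingType) (I : R -> Prop) : Prop :=
  I 0 /\ (forall a b, I a -> I b -> I (a + b)) /\
  (forall r a, I a -> I (r * a)).

From mathcomp Require Import all_boot all_order all_algebra.
Local Open Scope ring_scope.
Import GRing.Theory.
Set Implicit Arguments. Unset Strict Implicit.

(* If u v = 0 then the Leibniz rule gives d(u) v = - u d(v), so a letter of a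
   word can be moved from one factor to the other at the cost of a sign, as
   long as all products of shorter total length vanish.  Moving every letter
   onto y rewrites θ(x) θ'(y) as ± x w(y), which lies in I; moving them all
   back onto x rewrites it as ± y w'(x), which lies in J.  Hence it is 0, and
   induction on the total length of θ and θ' concludes. *)

Section Derivation.
Variables (R : comPzRingType) (d : R -> R).
Hypothesis d_der : is_derivation d.

Lemma derivation0 : d 0 = 0.
Proof. by case: d_der => dD _; apply: (@addrI _ (d 0)); rewrite -dD !addr0. Qed.

Lemma derivation_mul_eq0 (u v : R) : u * v = 0 -> d u * v = - (u * d v).
Proof.
case: d_der => _ dM huv; apply/eqP; rewrite -addr_eq0 addrC.
by rewrite -dM huv derivation0.
Qed.

End Derivation.

Section DisjointIdeals.
Variables (R : comPzRingType) (I J : R -> Prop).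

Lemma ideal_mulr (a r : R) : is_ideal I -> I a -> I (a * r).
Proof. by case=> _ [_ IM] Ia; rewrite mulrC; apply: IM. Qed.

Definition theta_vanish (n : nat) :=
  forall (th th' : ThetaHat R) (x y : R), I x -> J y ->
    (size th + size th' = n)%N -> theta_act th x * theta_act th' y = 0.

Lemma theta_act_mul_catrev n : theta_vanish n ->
  forall (th th' : ThetaHat R) (x y : R), I x -> J y ->
    (size th + size th' = n.+1)%N ->
  theta_act th x * theta_act th' y =
    (-1) ^+ size th * (x * theta_act (catrev th th') y).
Proof.
move=> van; elim=> [|d th IHth] th' x y Ix Jy /= hsize.
  by rewrite mul1r.
have hvan : theta_act th x * theta_act th' y = 0.
  by apply: van => //; apply: succn_inj; rewrite -addSn.
rewrite (derivation_mul_eq0 (proj2_sig d) hvan).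
have -> : proj1_sig d (theta_act th' y) = theta_act (d :: th') y by [].
rewrite IHth ?exprS ?mulN1r ?mulNr //.
by rewrite /= addnS -addSn.
Qed.

End DisjointIdeals.

Lemma theta_vanish_sym (R : comPzRingType) (I J : R -> Prop) n :
  theta_vanish I J n -> theta_vanish J I n.
Proof.
by move=> van th th' y x Jy Ix hsize; rewrite mulrC van // addnC.
Qed.

Section Vanishing.
Variables (R : comPzRingType) (I J : R -> Prop).
Hypotheses (hI : is_ideal I) (hJ : is_ideal J).
Hypothesis hIJ : forall z : R, I z -> J z -> z = 0.

Lemma theta_vanishS n : theta_vanish I J n -> theta_vanish I J n.+1.
Proof.
move=> van th th' x y Ix Jy hsize.
rewrite (theta_act_mul_catrev van) //.
set w := catrev th th'.
have size_w : size w = n.+1 by rewrite /w catrevE size_cat size_rev.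
suff -> : x * theta_act w y = 0 by rewrite mulr0.
apply: hIJ; first exact: ideal_mulr.
have van' := theta_vanish_sym van.
rewrite mulrC (theta_act_mul_catrev van' (th:=w) (th':=[::]) Jy Ix) ?addn0 //.
case: hJ => _ [_ JM]; apply: JM; exact: ideal_mulr.
Qed.

Lemma theta_vanish0 : theta_vanish I J 0.
Proof.
case=> [|//] [|//] x y Ix Jy _ /=.
apply: hIJ; first exact: ideal_mulr.
by rewrite mulrC; apply: ideal_mulr.
Qed.

Lemma theta_vanishes n : theta_vanish I J n.
Proof. by elim: n => [|n]; [exact: theta_vanish0 | exact: theta_vanishS]. Qed.

End Vanishing.

Theorem lemmaA14 (R : comPzRingType) (I J : R -> Prop)
  (hI : is_ideal I) (hJ : is_ideal J)
  (hIJ : forall z : R, I z -> J z -> z = 0)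
  (x y : R) (hx : I x) (hy : J y) :
  forall theta theta' : ThetaHat R, theta_act theta x * theta_act theta' y = 0.
Proof.
by move=> th th'; exact: (theta_vanishes hI hJ hIJ hx hy erefl).
Qed.
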